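(* Let $0<e<d$ be coprime integers and let $e'$ be the unique integer with $0<e'<d$ and $ee'\equiv1\pmod d$. Let $J=\{(i,j)\in\mathbb{Z}_{\ge0}^2\setminus\{(0,0)\}: i+ej\equiv0\pmod d,\ i<e,\ j<e'\}$. Then $|J|\le1$ if and only if $e$ divides $d+1$. *)

From mathcomp Require Import all_boot.
Set Implicit Arguments. Unset Strict Implicit. Unset Printing Implicit Defensive.

Definition Jset (d e e' : nat) : {set 'I_e * 'I_e'} :=
  [set p : 'I_e * 'I_e' |
     ((p.1 : nat), (p.2 : nat)) != (0, 0) & d %| (p.1 : nat) + e * p.2].

(* Writing e e' = m d + 1, the weight i + e j of a pair of J is a positive
   multiple a d of d below e e', so 1 <= a <= m; conversely each such a is the
   weight of exactly one pair, namely (a d mod e, a d div e).  Hence |J| = m, and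
   m <= 1 means e e' <= d + 1.  If e divides d + 1, say d + 1 = k e, then
   k = k e e' = e' (d + 1) = e' (mod d) forces k = e' and e e' = d + 1. *)
From mathcomp Require Import all_boot zify.

Set Implicit Arguments.
Unset Strict Implicit.
Unset Printing Implicit Defensive.

Definition Jweight (e e' : nat) (p : 'I_e * 'I_e') : nat := p.1 + e * p.2.

Lemma Jweight_inj (e e' : nat) : injective (@Jweight e e').
Proof.
move=> [i j] [i' j']; rewrite /Jweight /= => eq_w.
have e_gt0 : 0 < e by apply: leq_ltn_trans (ltn_ord i).
rewrite ![_ + e * _]addnC ![e * _]mulnC in eq_w.
congr pair; apply: val_inj => /=.
- by have := congr1 (modn^~ e) eq_w; rewrite !modnMDl !modn_small.
- by have := congr1 (divn^~ e) eq_w; rewrite !divnMDl // !divn_small // !addn0.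
Qed.

Lemma Jweight_lt (e e' : nat) (p : 'I_e * 'I_e') : Jweight p < e * e'.
Proof. by case: p => [[i lt_i] [j lt_j]]; rewrite /Jweight /=; nia. Qed.

Lemma mem_Jset (d e e' : nat) (p : 'I_e * 'I_e') :
  (p \in Jset d e e') = (0 < Jweight p) && (d %| Jweight p).
Proof.
case: p => [[i lt_i] [j lt_j]]; rewrite inE /Jweight /=.
have e_gt0 : 0 < e by apply: leq_ltn_trans lt_i.
by rewrite xpair_eqE addn_gt0 muln_gt0 e_gt0 !lt0n negb_and.
Qed.

Section CardJset.

Variables d e e' m : nat.
Hypotheses (d_gt0 : 0 < d) (ee'_eq : e * e' = m * d + 1).

Let J := Jset d e e'.

Lemma Jset_level (p : 'I_e * 'I_e') : p \in J -> 0 < Jweight p %/ d <= m.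
Proof.
rewrite mem_Jset => /andP [w_gt0 d_w]; have w_eq := esym (divnK d_w).
apply/andP; split.
- by rewrite divn_gt0 // dvdn_leq.
- by have := Jweight_lt p; rewrite ee'_eq addn1 ltnS {1}w_eq leq_pmul2r.
Qed.

Lemma Jset_level_surj (a : nat) :
  0 < a <= m -> exists2 p, p \in J & Jweight p = a * d.
Proof.
case/andP=> a_gt0 a_le.
have e_gt0 : 0 < e by nia.
have lt_q : a * d %/ e < e' by rewrite ltn_divLR //; nia.
have w_eq : a * d %% e + e * (a * d %/ e) = a * d by rewrite addnC mulnC -divn_eq.
exists (Ordinal (ltn_pmod (a * d) e_gt0), Ordinal lt_q); last exact: w_eq.
by rewrite mem_Jset /Jweight /= w_eq muln_gt0 a_gt0 d_gt0 dvdn_mull.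
Qed.

Lemma card_Jset : #|J| = m.
Proof.
pose level (p : 'I_e * 'I_e') : 'I_m.+1 := inord (Jweight p %/ d).
have levelE : {in J, forall p, (level p : nat) = Jweight p %/ d}.
  by move=> p /Jset_level /andP [_ le_m]; rewrite inordK.
rewrite -(card_in_imset (f := level)); last first.
  move=> p q pJ qJ /(congr1 val); rewrite /= !levelE // => eq_lvl.
  apply: Jweight_inj; move: pJ qJ.
  by rewrite !mem_Jset => /andP [_ /divnK <-] /andP [_ /divnK <-]; rewrite eq_lvl.
suff -> : level @: J = [set~ ord0] by rewrite cardsC1 card_ord.
apply/setP => a; rewrite !inE -val_eqE /= -lt0n; apply/imsetP/idP.
- by case=> p pJ ->; rewrite levelE //; case/andP: (Jset_level pJ).
- move=> a_gt0; have [p pJ w_p] : exists2 p, p \in J & Jweight p = a * d.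
    by apply: Jset_level_surj; rewrite a_gt0 -ltnS ltn_ord.
  by exists p => //; apply: val_inj; rewrite /= levelE // w_p mulnK.
Qed.

End CardJset.

Lemma dvdn_succ_mul_inv_le (d e e' : nat) :
  1 < d -> e' < d -> e * e' = 1 %[mod d] -> e %| d.+1 -> e * e' <= d.+1.
Proof.
move=> d_gt1 lt_e' ee'_mod /dvdnP [k dk].
have [e_le1 | e_gt1] := leqP e 1; first by nia.
suff -> : e' = k by rewrite mulnC -dk.
have lt_k : k < d by nia.
rewrite -(modn_small lt_e') -(modn_small lt_k).
have k_ee' : k * (e * e') = e' * d.+1 by rewrite dk; lia.
have := congr1 (modn^~ d) k_ee'.
by rewrite /= -modnMmr ee'_mod modnMmr muln1 mulnS -modnDmr modnMl addn0.
Qed.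

Theorem lemma5p3 (d e e' : nat) :
  0 < e -> e < d -> coprime e d ->
  0 < e' -> e' < d -> e * e' = 1 %[mod d] ->
  (#|Jset d e e'| <= 1) = (e %| d.+1).
Proof.
move=> e_gt0 lt_e _ _ lt_e' ee'_mod.
have d_gt1 : 1 < d by lia.
have ee'_eq : e * e' = e * e' %/ d * d + 1.
  by rewrite {1}(divn_eq (e * e') d) ee'_mod modn_small.
rewrite (card_Jset (ltnW d_gt1) ee'_eq).
apply/idP/idP => [| /(dvdn_succ_mul_inv_le d_gt1 lt_e' ee'_mod)]; last by nia.
move: (e * e' %/ d) ee'_eq => [|[|//]] ee'_eq _.
- by move/eqP: ee'_eq; rewrite muln_eq1 => /andP [/eqP -> _].
- by apply/dvdnP; exists e'; rewrite mulnC ee'_eq mul1n addn1.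
Qed.
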